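(* For every $n\in\{2,6,10,\dots\}$, every increasing path of $f_n$ that starts at the origin and ends at a local maximum of $f_n$ has length at least $2^{n/4}$. Hence any local search algorithm (with any neighbor selection and tie-breaking rule) that starts at the origin and moves at each step to a neighbor with strictly larger value of $f_n$ takes at least $2^{n/4}$ steps to reach a local maximum; since $f_n$ has encoding size polynomial in $n$, this is exponential both in $n$ and in the size of $f_n$.
   Context: For $n\in\{2,6,10,\dots\}$ define polynomials $f_n$ in variables $x_1,\dots,x_n$ (evaluated on $\{0,1\}^n$) recursively. Set $f_2(x_1,x_2):=x_1+x_2$. For $n\in\{2,6,10,\dots\}$, write $\mathbf{x}=(x_1,\dots,x_n)$, $S:=\sum_{i=1}^n x_i$, let $M_n:=\max_{\{0,1\}^n} f_n-\min_{\{0,1\}^n} f_n+1$, and define $f_{n+4}(\mathbf{x},x_{n+1},x_{n+2},x_{n+3},x_{n+4}) := f_n(\mathbf{x}) - M_n n^2 x_{n+1} + M_n(n+1) S x_{n+1} - x_{n+2} - 2M_n n S x_{n+2} + 2M_n n(n+2) x_{n+1}x_{n+2} - 4 S x_{n+3} + 2x_{n+1}x_{n+3} + 2x_{n+2}x_{n+3} - 3x_{n+3} + (M_n(n-1)+4) S x_{n+4} + 6M_n n^2 x_{n+3}x_{n+4} - 5M_n n^2 x_{n+4}$. For a function $f:\{0,1\}^m\to\mathbb{R}$, an increasing path is a sequence of vertices $v_0,v_1,\dots,v_k$ of $\{0,1\}^m$ such that consecutive vertices differ in exactly one coordinate and $f(v_{j+1})>f(v_j)$ for all $j$; its length is $k$.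 A local maximum is a vertex no neighbor of which (vertex differing in exactly one coordinate) has strictly larger value. *)

From Stdlib Require Import ZArith List Reals.
Import ListNotations.
Local Open Scope Z_scope.

(* coordinate x_i (1-based), as 0/1 integer *)
Definition xc (v : list bool) (i : nat) : Z := if nth (i - 1)%nat v false then 1 else 0.

Definition sumx (v : list bool) (n : nat) : Z :=
  fold_right Z.add 0 (map (xc v) (seq 1 n)).

Fixpoint cube (n : nat) : list (list bool) :=
  match n with
  | O => [ [] ]
  | S m => map (cons false) (cube m) ++ map (cons true) (cube m)
  end.

Definition zmax_list (l : list Z) : Z :=
  match l with [] => 0 | a :: t => fold_left Z.max t a end.
Definition zmin_list (l : list Z) : Z :=
  match l with [] => 0 | a :: t => fold_left Z.min t a end.

Definition Mrange (g : list bool -> Z) (n : nat) : Z :=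
  zmax_list (map g (cube n)) - zmin_list (map g (cube n)) + 1.

(* fk k = f_{4k+2}; it reads only the first 4k+2 coordinates *)
Fixpoint fk (k : nat) : list bool -> Z :=
  match k with
  | O => fun v => xc v 1 + xc v 2
  | S k' =>
      let g := fk k' in
      let nn := (4 * k' + 2)%nat in
      let M := Mrange g nn in
      let n := Z.of_nat nn in
      fun v =>
        let S := sumx v nn in
        let a := xc v (nn + 1) in
        let b := xc v (nn + 2) in
        let c := xc v (nn + 3) in
        let d := xc v (nn + 4) in
        g v - M * n ^ 2 * a + M * (n + 1) * S * a - b - 2 * M * n * S * b
        + 2 * M * n * (n + 2) * a * b - 4 * S * c + 2 * a * c + 2 * b * c
        - 3 * c + (M * (n - 1) + 4) * S * d + 6 * M * n ^ 2 * c * d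
        - 5 * M * n ^ 2 * d
  end.

(* f_n for n in {2,6,10,...} *)
Definition f_n (n : nat) : list bool -> Z := fk (n / 4).

Fixpoint hdist (u v : list bool) : nat :=
  match u, v with
  | a :: u', b :: v' => ((if Bool.eqb a b then 0 else 1) + hdist u' v')%nat
  | _, _ => 0%nat
  end.

Definition adjacent (m : nat) (u v : list bool) : Prop :=
  length u = m /\ length v = m /\ hdist u v = 1%nat.

(* v0, vs = v0 v1 ... vk is an increasing path of g in {0,1}^m (length k = length vs) *)
Fixpoint incr_path_from (m : nat) (g : list bool -> Z) (v : list bool)
  (vs : list (list bool)) : Prop :=
  match vs with
  | [] => True
  | w :: vs' => adjacent m v w /\ g v < g w /\ incr_path_from m g w vs'
  end.

Definition is_local_max (m : nat) (g : list bool -> Z) (v : list bool) : Prop :=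
  length v = m /\ forall w, adjacent m v w -> ~ (g v < g w).

Definition origin (m : nat) : list bool := repeat false m.

From Stdlib Require Import ZArith List Reals.
From Stdlib Require Import Lia Psatz.
Import ListNotations.

(* Write f_{n+4}(x, q) = f_n(x) + h(S(x), q), where S is the Hamming weight of x and
   q = (x_{n+1}, ..., x_{n+4}) are four control bits.  The scale M_n makes the gadget h
   dominate every change of f_n: a flip of a control bit is improving only along the
   chain 0000 -> 1000 (at x = 1^n) -> 1100 -> 1110 (at x = 0^n) -> 1111, and under the
   controls 1000, 1100, 1110 the slope of h in S forces the direction of every move of x,
   while under 0000 and 1111 the gadget is constant and x moves exactly as for f_n.
   Hence the all-ones vector is the only local maximum, and an increasing path from the
   origin to it climbs f_n from 0^n to 1^n under 0000, walks x back to 0^n under 1100,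
   and climbs f_n from 0^n to 1^n again under 1111.  The minimal length therefore
   doubles with each step n -> n + 4, giving 2^((n+2)/4) >= 2^(n/4). *)

Local Open Scope Z_scope.

Fixpoint weight (x : list bool) : Z :=
  match x with [] => 0 | b :: t => Z.b2z b + weight t end.

Lemma weight_bounds x : 0 <= weight x <= Z.of_nat (length x).
Proof. induction x as [|[|] x IH]; cbn [weight length Z.b2z]; lia. Qed.

Lemma weight_repeat b m : weight (repeat b m) = Z.b2z b * Z.of_nat m.
Proof.
  induction m as [|m IH]; cbn [repeat weight]; [lia|].
  rewrite IH; destruct b; cbn [Z.b2z]; lia.
Qed.

Lemma weight_eq0 x m : length x = m -> weight x = 0 -> x = repeat false m.
Proof.
  intros <-; induction x as [|[|] x IH]; cbn [weight length repeat Z.b2z]; intros Hw;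
    [reflexivity| |].
  - pose proof (weight_bounds x); lia.
  - f_equal; apply IH; lia.
Qed.

Lemma weight_eq_length x m : length x = m -> weight x = Z.of_nat m -> x = repeat true m.
Proof.
  intros <-; induction x as [|[|] x IH]; cbn [weight length repeat Z.b2z]; intros Hw;
    [reflexivity| |].
  - f_equal; apply IH; lia.
  - pose proof (weight_bounds x); lia.
Qed.

Lemma sumx_shift_weight v s m :
  fold_right Z.add 0 (map (xc v) (seq (S s) m)) = weight (firstn m (skipn s v)).
Proof.
  revert s; induction m as [|m IH]; intros s; [reflexivity|].
  cbn [seq map fold_right]; rewrite IH.
  replace (skipn (S s) v) with (skipn 1 (skipn s v))
    by (rewrite skipn_skipn; f_equal; lia).
  unfold xc; replace (S s - 1)%nat with s by lia.
  replace (nth s v false) with (nth 0 (skipn s v) false) by (rewrite nth_skipn; f_equal; lia).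
  destruct (skipn s v) as [|[|] t]; cbn; rewrite ?firstn_nil; reflexivity.
Qed.

Lemma sumx_weight v m : sumx v m = weight (firstn m v).
Proof. exact (sumx_shift_weight v 0 m). Qed.

Lemma hdist_refl x : hdist x x = 0%nat.
Proof. induction x as [|[|] x IH]; cbn; auto. Qed.

Lemma hdist_app x y p q : length x = length y ->
  hdist (x ++ p) (y ++ q) = (hdist x y + hdist p q)%nat.
Proof.
  revert y; induction x as [|a x IH]; intros [|b y] Hl; cbn [hdist length app] in *;
    try lia.
  rewrite IH by lia; lia.
Qed.

Lemma hdist_eq0 x y : length x = length y -> hdist x y = 0%nat -> x = y.
Proof.
  revert y; induction x as [|a x IH]; intros [|b y] Hl Hd; cbn [hdist length] in *;
    try lia; auto.
  destruct a, b; cbn [Bool.eqb] in Hd; try lia; f_equal; apply IH; lia.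
Qed.

Lemma weight_hdist1 x y : length x = length y -> hdist x y = 1%nat ->
  weight y = weight x + 1 \/ weight y = weight x - 1.
Proof.
  revert y; induction x as [|a x IH]; intros [|b y] Hl Hd; cbn [hdist length] in *;
    try lia.
  destruct a, b; cbn [weight Bool.eqb Z.b2z] in Hd |- *.
  - destruct (IH y); lia.
  - rewrite (hdist_eq0 x y) by lia; lia.
  - rewrite (hdist_eq0 x y) by lia; lia.
  - destruct (IH y); lia.
Qed.

Lemma adjacent_weight m x y : adjacent m x y ->
  weight y = weight x + 1 \/ weight y = weight x - 1.
Proof. intros [Hx [Hy Hd]]; apply weight_hdist1; lia. Qed.

Lemma adjacent_length m x y : adjacent m x y -> length y = m.
Proof. intros [_ [Hy _]]; exact Hy. Qed.

Lemma adjacent_app_l m p x y q : length q = p -> adjacent m x y ->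
  adjacent (m + p) (x ++ q) (y ++ q).
Proof.
  intros Hq [Hx [Hy Hd]]; unfold adjacent.
  rewrite !length_app, hdist_app, hdist_refl by lia; repeat split; lia.
Qed.

Lemma adjacent_app_r m p x q q' : length x = m -> adjacent p q q' ->
  adjacent (m + p) (x ++ q) (x ++ q').
Proof.
  intros Hx [Hq [Hq' Hd]]; unfold adjacent.
  rewrite !length_app, hdist_app, hdist_refl by lia; repeat split; lia.
Qed.

Lemma adjacent_app_inv m p x q w : length x = m -> length q = p ->
  adjacent (m + p) (x ++ q) w ->
  (exists y, w = y ++ q /\ adjacent m x y) \/
  (exists q', w = x ++ q' /\ adjacent p q q').
Proof.
  intros Hx Hq [_ [Hw Hd]].
  rewrite <- (firstn_skipn m w) in Hd |- *.
  assert (Hl1 : length (firstn m w) = m) by (rewrite length_firstn; lia).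
  assert (Hl2 : length (skipn m w) = p) by (rewrite length_skipn; lia).
  rewrite hdist_app in Hd by lia.
  destruct (hdist x (firstn m w)) eqn:E.
  - right; exists (skipn m w); rewrite <- (hdist_eq0 x (firstn m w)) by lia.
    repeat split; auto; lia.
  - left; exists (firstn m w); rewrite <- (hdist_eq0 q (skipn m w)) by lia.
    repeat split; auto; lia.
Qed.

Lemma adjacent_weight_up x : weight x < Z.of_nat (length x) ->
  exists y, adjacent (length x) x y /\ weight y = weight x + 1.
Proof.
  induction x as [|[|] x IH]; cbn [weight length Z.b2z]; intros Hw; [lia| |].
  - destruct IH as [y [[_ [Hy Hd]] Hwy]]; [lia|].
    exists (true :: y); unfold adjacent;
      cbn [hdist weight length Bool.eqb Z.b2z]; repeat split; lia.
  - exists (true :: x); unfold adjacent;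
      cbn [hdist weight length Bool.eqb Z.b2z]; rewrite hdist_refl; repeat split; lia.
Qed.

Lemma adjacent_weight_down x : 0 < weight x ->
  exists y, adjacent (length x) x y /\ weight y = weight x - 1.
Proof.
  induction x as [|[|] x IH]; cbn [weight length Z.b2z]; intros Hw; [lia| |].
  - exists (false :: x); unfold adjacent;
      cbn [hdist weight length Bool.eqb Z.b2z]; rewrite hdist_refl; repeat split; lia.
  - destruct IH as [y [[_ [Hy Hd]] Hwy]]; [lia|].
    exists (false :: y); unfold adjacent;
      cbn [hdist weight length Bool.eqb Z.b2z]; repeat split; lia.
Qed.

Lemma last_cons {A} (a : A) l d : last (a :: l) d = last l a.
Proof.
  revert a d; induction l as [|b l IH]; intros a d; [reflexivity|].
  change (last (b :: l) d = last (b :: l) a); rewrite !IH; reflexivity.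
Qed.

Lemma last_app_cons {A} l1 (a : A) l2 d : last (l1 ++ a :: l2) d = last l2 a.
Proof.
  revert d; induction l1 as [|b l1 IH]; intros d; [apply last_cons|].
  cbn [app]; rewrite last_cons; apply IH.
Qed.

Lemma last_map {A B} (h : A -> B) l d : last (map h l) (h d) = h (last l d).
Proof.
  revert d; induction l as [|a l IH]; intros d; [reflexivity|].
  rewrite map_cons, !last_cons; apply IH.
Qed.

Lemma incr_path_last_length m g v vs : length v = m -> incr_path_from m g v vs ->
  length (last vs v) = m.
Proof.
  revert v; induction vs as [|w vs IH]; intros v Hv Hp; [exact Hv|].
  destruct Hp as [Hadj [_ Hp]]; rewrite last_cons.
  exact (IH w (adjacent_length _ _ _ Hadj) Hp).
Qed.

Lemma in_cube x : In x (cube (length x)).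
Proof.
  induction x as [|[|] x IH]; cbn; [auto| |]; apply in_or_app; [right|left];
    apply in_map; exact IH.
Qed.

Lemma fold_max_ge t h z : z = h \/ In z t -> z <= fold_left Z.max t h.
Proof.
  revert h z; induction t as [|a t IH]; intros h z Hz; cbn.
  - destruct Hz as [->|[]]; lia.
  - destruct Hz as [E|[E|Hz]]; [| |apply IH; right; exact Hz];
      (apply Z.le_trans with (Z.max h a); [lia|apply IH; left; reflexivity]).
Qed.

Lemma fold_min_le t h z : z = h \/ In z t -> fold_left Z.min t h <= z.
Proof.
  revert h z; induction t as [|a t IH]; intros h z Hz; cbn.
  - destruct Hz as [->|[]]; lia.
  - destruct Hz as [E|[E|Hz]]; [| |apply IH; right; exact Hz];
      (apply Z.le_trans with (Z.min h a); [apply IH; left; reflexivity|lia]).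
Qed.

Lemma zmax_list_ge l z : In z l -> z <= zmax_list l.
Proof. destruct l as [|a t]; [intros []|]; intros Hz; apply fold_max_ge; destruct Hz; auto. Qed.

Lemma zmin_list_le l z : In z l -> zmin_list l <= z.
Proof. destruct l as [|a t]; [intros []|]; intros Hz; apply fold_min_le; destruct Hz; auto. Qed.

Lemma Mrange_gt g m x y : length x = m -> length y = m -> g x - g y < Mrange g m.
Proof.
  intros Hx Hy; unfold Mrange; subst m.
  pose proof (zmax_list_ge (map g (cube (length x))) (g x) (in_map g _ _ (in_cube x))).
  pose proof (zmin_list_le (map g (cube (length y))) (g y) (in_map g _ _ (in_cube y))).
  rewrite Hy in *; lia.
Qed.

Lemma Mrange_ge1 g m : 1 <= Mrange g m.
Proof.
  pose proof (Mrange_gt g m _ _ (repeat_length false m) (repeat_length false m)); lia.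
Qed.

(* The summand h(S, q) of f_{n+4} (0 on lists of length other than 4). *)
Definition gadget (M n S : Z) (q : list bool) : Z :=
  match q with
  | [a; b; c; d] =>
      let a := Z.b2z a in let b := Z.b2z b in let c := Z.b2z c in let d := Z.b2z d in
      - M * n ^ 2 * a + M * (n + 1) * S * a - b - 2 * M * n * S * b
      + 2 * M * n * (n + 2) * a * b - 4 * S * c + 2 * a * c + 2 * b * c
      - 3 * c + (M * (n - 1) + 4) * S * d + 6 * M * n ^ 2 * c * d
      - 5 * M * n ^ 2 * d
  | _ => 0
  end.

Definition slope (M n : Z) (q : list bool) : Z :=
  match q with
  | [a; b; c; d] =>
      M * (n + 1) * Z.b2z a - 2 * M * n * Z.b2z b - 4 * Z.b2z c
      + (M * (n - 1) + 4) * Z.b2z d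
  | _ => 0
  end.

Lemma gadget_affine M n S q : gadget M n S q = gadget M n 0 q + S * slope M n q.
Proof. destruct q as [|a [|b [|c [|d [|e q]]]]]; cbn [gadget slope]; ring. Qed.

Lemma xc_agree v w i : (forall j, (j < i)%nat -> nth j v false = nth j w false) ->
  (0 < i)%nat -> xc v i = xc w i.
Proof. intros Hvw Hi; unfold xc; rewrite Hvw by lia; reflexivity. Qed.

Lemma sumx_agree v w m : (forall j, (j < m)%nat -> nth j v false = nth j w false) ->
  sumx v m = sumx w m.
Proof.
  intros Hvw; unfold sumx; f_equal; apply map_ext_in; intros i Hi.
  apply in_seq in Hi; apply xc_agree; [|lia]; intros j Hj; apply Hvw; lia.
Qed.

Lemma fk_agree k v w : (forall j, (j < 4 * k + 2)%nat -> nth j v false = nth j w false) ->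
  fk k v = fk k w.
Proof.
  revert v w; induction k as [|k IH]; intros v w Hvw.
  - cbn [fk]; rewrite (xc_agree v w 1), (xc_agree v w 2); try lia; try reflexivity;
      intros j Hj; apply Hvw; lia.
  - cbn [fk]; cbv zeta.
    rewrite (IH v w), (sumx_agree v w) by (intros j Hj; apply Hvw; lia).
    rewrite !(xc_agree v w (4 * k + 2 + _)); try reflexivity; try lia;
      intros j Hj; apply Hvw; lia.
Qed.

Lemma fk_app k x y : length x = (4 * k + 2)%nat -> fk k (x ++ y) = fk k x.
Proof. intros Hx; apply fk_agree; intros j Hj; apply app_nth1; lia. Qed.

Lemma xc_app_r x q i : xc (x ++ q) (length x + S i) = Z.b2z (nth i q false).
Proof.
  unfold xc; replace (length x + S i - 1)%nat with (length x + i)%nat by lia.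
  rewrite app_nth2_plus; destruct (nth i q false); reflexivity.
Qed.

Lemma fk_succ_app k x q : length x = (4 * k + 2)%nat -> length q = 4%nat ->
  fk (S k) (x ++ q) =
  fk k x + gadget (Mrange (fk k) (4 * k + 2)) (Z.of_nat (4 * k + 2)) (weight x) q.
Proof.
  intros Hx Hq; destruct q as [|a [|b [|c [|d [|e q]]]]]; try discriminate.
  cbn [fk]; cbv zeta; rewrite fk_app, sumx_weight by exact Hx.
  rewrite <- Hx, firstn_app, Nat.sub_diag, firstn_O, app_nil_r, firstn_all.
  rewrite !xc_app_r; cbn [gadget nth]; ring.
Qed.

Definition q0000 := [false; false; false; false].
Definition q1000 := [true; false; false; false].
Definition q1100 := [true; true; false; false].
Definition q1110 := [true; true; true; false].
Definition q1111 := [true; true; true; true].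

Lemma slope_q0000 M n : slope M n q0000 = 0.
Proof. cbv [slope Z.b2z q0000]; ring. Qed.

Lemma slope_q1111 M n : slope M n q1111 = 0.
Proof. cbv [slope Z.b2z q1111]; ring. Qed.

Lemma slope_q1000 M n : slope M n q1000 = M * (n + 1).
Proof. cbv [slope Z.b2z q1000]; ring. Qed.

Lemma slope_q1110 M n : slope M n q1110 = - M * (n - 1) - 4.
Proof. cbv [slope Z.b2z q1110]; ring. Qed.

Ltac destruct_flip Hadj :=
  let Hl := fresh in let Hd := fresh in
  destruct Hadj as [_ [Hl Hd]];
  match type of Hl with
  | length ?q = _ =>
      let a := fresh in let b := fresh in let c := fresh in let d := fresh in
      destruct q as [|a [|b [|c [|d [|? ?]]]]]; cbn [length] in Hl; try discriminate;
      destruct a, b, c, d; cbn [hdist Bool.eqb] in Hd; try discriminate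
  end.

(* Hypotheses are reverted before unfolding: [cbv in H] leaves the kernel a very costly
   conversion check at [Qed]. *)
Ltac gadget_arith :=
  repeat match goal with
         | H : context [gadget _ _ _ _] |- _ => revert H
         | H : context [slope _ _ _] |- _ => revert H
         end;
  cbv [gadget slope Z.b2z q0000 q1000 q1100 q1110 q1111]; intros; nia.

Section Gadget.
Variables M n : Z.
Hypothesis M_ge1 : 1 <= M.
Hypothesis n_ge2 : 2 <= n.

Lemma flip_from_q0000 S q : 0 <= S <= n -> adjacent 4 q0000 q ->
  gadget M n S q0000 < gadget M n S q -> q = q1000 /\ S = n.
Proof.
  intros HS Hadj Hlt; destruct_flip Hadj;
    first [split; [reflexivity|gadget_arith] | exfalso; gadget_arith].
Qed.

Lemma flip_from_q1000 q : adjacent 4 q1000 q ->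
  gadget M n n q1000 < gadget M n n q -> q = q1100.
Proof.
  intros Hadj Hlt; destruct_flip Hadj; first [reflexivity | exfalso; gadget_arith].
Qed.

Lemma flip_from_q1100 S q : 0 <= S <= n -> adjacent 4 q1100 q ->
  gadget M n S q1100 < gadget M n S q -> q = q1110 /\ S = 0.
Proof.
  intros HS Hadj Hlt; destruct_flip Hadj;
    first [split; [reflexivity|gadget_arith] | exfalso; gadget_arith].
Qed.

Lemma flip_from_q1110 q : adjacent 4 q1110 q ->
  gadget M n 0 q1110 < gadget M n 0 q -> q = q1111.
Proof.
  intros Hadj Hlt; destruct_flip Hadj; first [reflexivity | exfalso; gadget_arith].
Qed.

Lemma flip_from_q1111 S q : 0 <= S <= n -> adjacent 4 q1111 q ->
  gadget M n S q1111 < gadget M n S q -> False.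
Proof. intros HS Hadj Hlt; destruct_flip Hadj; gadget_arith. Qed.

Lemma gadget_local_max S q : 0 <= S <= n -> length q = 4%nat ->
  (forall q', adjacent 4 q q' -> gadget M n S q' <= gadget M n S q) ->
  (S < n -> slope M n q < M) -> (0 < S -> - M < slope M n q) ->
  q = q1111 \/ (q = q0000 /\ S < n).
Proof.
  intros HS Hq Hflip Hup Hdown.
  destruct q as [|a [|b [|c [|d [|? ?]]]]]; try discriminate.
  assert (F : forall q', hdist [a; b; c; d] q' = 1%nat -> length q' = 4%nat ->
             gadget M n S q' <= gadget M n S [a; b; c; d])
    by (intros; apply Hflip; repeat split; assumption).
  pose proof (F [negb a; b; c; d] ltac:(destruct a, b, c, d; reflexivity) eq_refl) as F1.
  pose proof (F [a; negb b; c; d] ltac:(destruct a, b, c, d; reflexivity) eq_refl) as F2.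
  pose proof (F [a; b; negb c; d] ltac:(destruct a, b, c, d; reflexivity) eq_refl) as F3.
  pose proof (F [a; b; c; negb d] ltac:(destruct a, b, c, d; reflexivity) eq_refl) as F4.
  clear F Hflip.
  destruct (Z.lt_ge_cases S n) as [Hn|Hn]; [specialize (Hup Hn)|clear Hup];
  destruct (Z.lt_ge_cases 0 S) as [Hpos|Hpos];
    [specialize (Hdown Hpos)|clear Hdown|specialize (Hdown Hpos)|clear Hdown];
  destruct a, b, c, d; cbn [negb] in *;
    first [left; reflexivity | right; split; [reflexivity|exact Hn] | exfalso; gadget_arith].
Qed.

End Gadget.

Section Level.
Variable k : nat.
Local Notation N := (4 * k + 2)%nat.
Local Notation g := (fk k).
Local Notation f := (fk (S k)).
Local Notation M := (Mrange (fk k) (4 * k + 2)).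
Local Notation n := (Z.of_nat (4 * k + 2)).

Lemma level_M_ge1 : 1 <= M.
Proof. apply Mrange_ge1. Qed.

Lemma level_n_ge2 : 2 <= n.
Proof. lia. Qed.

Lemma weight_level x : length x = N -> 0 <= weight x <= n.
Proof. intros Hx; rewrite <- Hx; apply weight_bounds. Qed.

Lemma f_app x q : length x = N -> length q = 4%nat ->
  f (x ++ q) = g x + gadget M n (weight x) q.
Proof. apply fk_succ_app. Qed.

Lemma f_app_flat x q : length x = N -> length q = 4%nat -> slope M n q = 0 ->
  f (x ++ q) = g x + gadget M n 0 q.
Proof. intros Hx Hq Hs; rewrite f_app, gadget_affine, Hs by assumption; ring. Qed.

Lemma f_step x q w : length x = N -> length q = 4%nat ->
  adjacent (N + 4) (x ++ q) w -> f (x ++ q) < f w ->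
  (exists y, w = y ++ q /\ adjacent N x y /\ f (x ++ q) < f (y ++ q)) \/
  (exists q', w = x ++ q' /\ adjacent 4 q q' /\
     gadget M n (weight x) q < gadget M n (weight x) q').
Proof.
  intros Hx Hq Hadj Hlt.
  destruct (adjacent_app_inv _ _ x q w Hx Hq Hadj) as [[y [-> Hy]]|[q' [-> Hq']]].
  - left; exists y; auto.
  - right; exists q'; rewrite !f_app in Hlt by (auto; exact (adjacent_length _ _ _ Hq')).
    split; [reflexivity|split; [exact Hq'|lia]].
Qed.

(* M exceeds any change of g, so an improving move of x must follow the slope of the gadget. *)
Lemma x_move_slope x y q : adjacent N x y -> length q = 4%nat ->
  f (x ++ q) < f (y ++ q) -> (weight x - weight y) * slope M n q < M.
Proof.
  intros [Hx [Hy _]] Hq Hlt; rewrite !f_app, (gadget_affine _ _ (weight x)),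
    (gadget_affine _ _ (weight y)) in Hlt by assumption.
  pose proof (Mrange_gt g N y x Hy Hx); nia.
Qed.

Lemma flat_phase q x vs : length x = N -> length q = 4%nat -> slope M n q = 0 ->
  incr_path_from (N + 4) f (x ++ q) vs ->
  exists ys rest, incr_path_from N g x ys /\
    vs = map (fun y => y ++ q) ys ++ rest /\
    (rest = [] \/
     exists q' rest', rest = (last ys x ++ q') :: rest' /\ adjacent 4 q q' /\
       gadget M n (weight (last ys x)) q < gadget M n (weight (last ys x)) q' /\
       incr_path_from (N + 4) f (last ys x ++ q') rest').
Proof.
  intros Hx Hq Hs; revert x Hx; induction vs as [|w vs IH]; intros x Hx Hp.
  { exists [], []; repeat split; auto. }
  destruct Hp as [Hadj [Hlt Hp]].
  destruct (f_step x q w Hx Hq Hadj Hlt) as [[y [-> [Hy Hxy]]]|[q' [-> [Hq' Hgain]]]].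
  - destruct (IH y (adjacent_length _ _ _ Hy) Hp) as [ys [rest [Hys [-> Hrest]]]].
    exists (y :: ys), rest; rewrite last_cons; split; [|split; [reflexivity|exact Hrest]].
    split; [exact Hy|split; [|exact Hys]].
    rewrite !f_app_flat in Hxy by (auto; exact (adjacent_length _ _ _ Hy)); lia.
  - exists [], ((x ++ q') :: vs); cbn [last map app]; repeat split; auto.
    right; exists q', vs; auto.
Qed.

(* The vertices visited after control 0000 has been left and before 1111 is reached. *)
Definition mid_state (u : list bool) : Prop :=
  u = repeat true N ++ q1000 \/ (exists x, length x = N /\ u = x ++ q1100) \/
  u = repeat false N ++ q1110.

Lemma mid_state_step u w : mid_state u -> adjacent (N + 4) u w -> f u < f w ->
  mid_state w \/ w = repeat false N ++ q1111.
Proof.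
  pose proof level_M_ge1; pose proof level_n_ge2.
  intros [->|[[x [Hx ->]]| ->]] Hadj Hlt.
  - destruct (f_step _ q1000 w (repeat_length _ _) eq_refl Hadj Hlt)
      as [[y [-> [Hy Hxy]]]|[q' [-> [Hq' Hgain]]]].
    + exfalso; apply x_move_slope in Hxy; [|exact Hy|reflexivity].
      pose proof (weight_level y (adjacent_length _ _ _ Hy)).
      destruct (adjacent_weight _ _ _ Hy); rewrite weight_repeat, slope_q1000 in *;
        cbn [Z.b2z] in *; nia.
    + rewrite weight_repeat in Hgain; cbn [Z.b2z] in Hgain; rewrite Z.mul_1_l in Hgain.
      rewrite (flip_from_q1000 M n ltac:(lia) ltac:(lia) q' Hq' Hgain).
      left; right; left; exists (repeat true N); rewrite repeat_length; auto.
  - destruct (f_step x q1100 w Hx eq_refl Hadj Hlt)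
      as [[y [-> [Hy _]]]|[q' [-> [Hq' Hgain]]]].
    + left; right; left; exists y; split; [exact (adjacent_length _ _ _ Hy)|reflexivity].
    + destruct (flip_from_q1100 M n ltac:(lia) ltac:(lia) _ q' (weight_level x Hx) Hq' Hgain)
        as [-> Hw].
      rewrite (weight_eq0 x N Hx Hw).
      left; right; right; reflexivity.
  - destruct (f_step _ q1110 w (repeat_length _ _) eq_refl Hadj Hlt)
      as [[y [-> [Hy Hxy]]]|[q' [-> [Hq' Hgain]]]].
    + exfalso; apply x_move_slope in Hxy; [|exact Hy|reflexivity].
      pose proof (weight_level y (adjacent_length _ _ _ Hy)).
      destruct (adjacent_weight _ _ _ Hy); rewrite weight_repeat, slope_q1110 in *;
        cbn [Z.b2z] in *; nia.
    + rewrite weight_repeat in Hgain; cbn [Z.b2z] in Hgain; rewrite Z.mul_0_l in Hgain.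
      rewrite (flip_from_q1110 M n ltac:(lia) ltac:(lia) q' Hq' Hgain); right; reflexivity.
Qed.

Lemma mid_phase vs u : mid_state u -> incr_path_from (N + 4) f u vs ->
  last vs u = repeat true (N + 4) ->
  exists pre post, vs = pre ++ (repeat false N ++ q1111) :: post /\
    incr_path_from (N + 4) f (repeat false N ++ q1111) post.
Proof.
  revert u; induction vs as [|w vs IH]; intros u Hu Hp Hl.
  - exfalso; cbn [last] in Hl.
    destruct Hu as [->|[[x [_ ->]]| ->]];
      apply eq_sym, repeat_eq_app, proj2 in Hl; discriminate.
  - destruct Hp as [Hadj [Hlt Hp]]; rewrite last_cons in Hl.
    destruct (mid_state_step u w Hu Hadj Hlt) as [Hw| ->].
    + destruct (IH w Hw Hp Hl) as [pre [post [-> Hpost]]].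
      exists (w :: pre), post; auto.
    + exists [], vs; auto.
Qed.

Lemma path_to_ones_doubles L :
  (forall ys, incr_path_from N g (origin N) ys ->
     last ys (origin N) = repeat true N -> (L <= length ys)%nat) ->
  forall vs, incr_path_from (N + 4) f (origin (N + 4)) vs ->
    last vs (origin (N + 4)) = repeat true (N + 4) -> (2 * L <= length vs)%nat.
Proof.
  pose proof level_M_ge1; pose proof level_n_ge2.
  intros IH vs Hp Hl; unfold origin in *; rewrite repeat_app in Hp, Hl.
  destruct (flat_phase q0000 (repeat false N) vs (repeat_length _ _) eq_refl
              (slope_q0000 M n) Hp)
    as [ys [rest [Hys [-> [->|[q' [rest' [-> [Hq' [Hgain Hrest]]]]]]]]]].
  { exfalso; rewrite app_nil_r, (last_map (fun y => y ++ q0000)) in Hl.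
    apply eq_sym, repeat_eq_app, proj2 in Hl; discriminate. }
  pose proof (incr_path_last_length _ _ _ _ (repeat_length _ _) Hys) as Hlen.
  destruct (flip_from_q0000 M n ltac:(lia) ltac:(lia) _ q' (weight_level _ Hlen) Hq' Hgain)
    as [-> Htop].
  apply (weight_eq_length _ _ Hlen) in Htop.
  rewrite Htop in Hrest, Hl; rewrite last_app_cons in Hl.
  destruct (mid_phase rest' _ ltac:(left; reflexivity) Hrest Hl) as [pre [post [-> Hpost]]].
  rewrite last_app_cons in Hl.
  destruct (flat_phase q1111 (repeat false N) post (repeat_length _ _) eq_refl
              (slope_q1111 M n) Hpost)
    as [ys2 [rest2 [Hys2 [-> [->|[q'' [rest'' [_ [Hq'' [Hgain' _]]]]]]]]]].
  2:{ exfalso; refine (flip_from_q1111 M n ltac:(lia) ltac:(lia) _ q'' _ Hq'' Hgain').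
      exact (weight_level _ (incr_path_last_length _ _ _ _ (repeat_length _ _) Hys2)). }
  rewrite app_nil_r, (last_map (fun y => y ++ q1111)) in Hl.
  apply eq_sym, repeat_eq_app, proj1 in Hl.
  rewrite (incr_path_last_length _ _ _ _ (repeat_length _ _) Hys2) in Hl.
  pose proof (IH ys Hys Htop); pose proof (IH ys2 Hys2 (eq_sym Hl)).
  repeat first [rewrite length_app | rewrite length_map | progress cbn [length]].
  lia.
Qed.

Lemma local_max_ones_step :
  (forall x, is_local_max N g x -> x = repeat true N) ->
  forall v, is_local_max (N + 4) f v -> v = repeat true (N + 4).
Proof.
  pose proof level_M_ge1; pose proof level_n_ge2.
  intros IH v [Hv Hmax].
  rewrite <- (firstn_skipn N v) in Hmax |- *.
  set (x := firstn N v) in *; set (q := skipn N v) in *.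
  assert (Hx : length x = N) by (unfold x; rewrite length_firstn; lia).
  assert (Hq : length q = 4%nat) by (unfold q; rewrite length_skipn; lia).
  clearbody x q; clear Hv.
  assert (Hflip : forall q', adjacent 4 q q' ->
            gadget M n (weight x) q' <= gadget M n (weight x) q).
  { intros q' Hq'; apply Z.nlt_ge; intros Hlt.
    apply (Hmax (x ++ q') (adjacent_app_r _ _ _ _ _ Hx Hq')).
    rewrite !f_app by (auto; exact (adjacent_length _ _ _ Hq')); lia. }
  assert (Hxmove : forall y, adjacent N x y -> f (y ++ q) <= f (x ++ q)).
  { intros y Hy; apply Z.nlt_ge; intros Hlt.
    exact (Hmax (y ++ q) (adjacent_app_l _ _ _ _ _ Hq Hy) Hlt). }
  assert (Hslope : forall y, adjacent N x y -> (weight y - weight x) * slope M n q < M).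
  { intros y Hy; pose proof (Hxmove y Hy) as Hle; destruct Hy as [_ [Hy _]].
    rewrite !f_app, (gadget_affine _ _ (weight x)), (gadget_affine _ _ (weight y)) in Hle
      by assumption.
    pose proof (Mrange_gt g N x y Hx Hy); nia. }
  assert (Hgmax : slope M n q = 0 -> x = repeat true N).
  { intros Hs; apply IH; split; [exact Hx|]; intros y Hy Hlt.
    pose proof (Hxmove y Hy).
    rewrite !f_app_flat in * by (auto; exact (adjacent_length _ _ _ Hy)); lia. }
  destruct (gadget_local_max M n ltac:(lia) ltac:(lia) (weight x) q (weight_level x Hx)
              Hq Hflip) as [->|[-> Hlt]].
  - intros Hup.
    destruct (adjacent_weight_up x) as [y [Hy Hwy]]; [rewrite Hx; exact Hup|].
    rewrite Hx in Hy; pose proof (Hslope y Hy); nia.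
  - intros Hdown.
    destruct (adjacent_weight_down x Hdown) as [y [Hy Hwy]].
    rewrite Hx in Hy; pose proof (Hslope y Hy); nia.
  - rewrite (Hgmax (slope_q1111 M n)); exact (eq_sym (repeat_app true N 4)).
  - exfalso; rewrite (Hgmax (slope_q0000 M n)), weight_repeat in Hlt; cbn [Z.b2z] in Hlt; lia.
Qed.

End Level.

Lemma fk0_local_max v : is_local_max 2 (fk 0) v -> v = [true; true].
Proof.
  intros [Hl Hmax]; destruct v as [|a [|b [|? ?]]]; try discriminate.
  destruct a, b; [reflexivity|exfalso..];
    [apply (Hmax [true; true]) | apply (Hmax [true; true]) | apply (Hmax [true; false])];
    solve [repeat split | cbv; reflexivity].
Qed.

Lemma fk0_path_to_ones vs : incr_path_from 2 (fk 0) (origin 2) vs ->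
  last vs (origin 2) = [true; true] -> (2 <= length vs)%nat.
Proof.
  destruct vs as [|w [|? ?]]; cbn [length]; intros Hp Hl; try lia; cbn in Hl; [discriminate|].
  subst w; destruct Hp as [[_ [_ Hd]] _]; discriminate.
Qed.

Lemma fk_local_max_ones k v : is_local_max (4 * k + 2) (fk k) v -> v = repeat true (4 * k + 2).
Proof.
  revert v; induction k as [|k IH]; [exact fk0_local_max|].
  replace (4 * S k + 2)%nat with (4 * k + 2 + 4)%nat by lia.
  exact (local_max_ones_step k IH).
Qed.

Lemma fk_path_to_ones_length k vs :
  incr_path_from (4 * k + 2) (fk k) (origin (4 * k + 2)) vs ->
  last vs (origin (4 * k + 2)) = repeat true (4 * k + 2) -> (2 ^ S k <= length vs)%nat.
Proof.
  revert vs; induction k as [|k IH]; [exact fk0_path_to_ones|].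
  replace (4 * S k + 2)%nat with (4 * k + 2 + 4)%nat by lia.
  intros vs Hp Hl; rewrite Nat.pow_succ_r'.
  exact (path_to_ones_doubles k _ IH vs Hp Hl).
Qed.

Lemma Rpower2_quarter_le k : (Rpower 2 (INR (4 * k + 2) / 4) <= INR (2 ^ S k))%R.
Proof.
  rewrite pow_INR; replace (INR 2) with 2%R by (cbn; lra).
  rewrite <- Rpower_pow by lra.
  apply Rle_Rpower; [lra|].
  rewrite S_INR, plus_INR, mult_INR; cbn [INR]; pose proof (pos_INR k); lra.
Qed.

Theorem theorem1 :
  forall (n : nat) (vs : list (list bool)),
    (2 <= n)%nat -> (n mod 4 = 2)%nat ->
    incr_path_from n (f_n n) (origin n) vs ->
    is_local_max n (f_n n) (last vs (origin n)) ->
    (Rpower 2 (INR n / 4) <= INR (length vs))%R.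
Proof.
  intros n vs _ Hmod Hp Hmax; unfold f_n in *.
  remember (n / 4)%nat as k eqn:Hk.
  assert (En : n = (4 * k + 2)%nat) by (subst k; pose proof (Nat.div_mod n 4); lia).
  subst n; apply fk_local_max_ones in Hmax.
  eapply Rle_trans; [apply Rpower2_quarter_le|].
  apply le_INR, fk_path_to_ones_length; assumption.
Qed.
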